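(* For every positive integer $t$ there exists an integer $K_t$ such that the following holds. Let $G$ be a group (not necessarily abelian, written additively), let $M$ be a multiset of size $m$ of non-identity elements of $G$, and let $S$ be a set of $k\ge K_t$ non-identity elements of $G$. Then, for every $t$-weak ordering $(y_1,\dots,y_m)$ of $M$, there exists an ordering $(y_{m+1},\dots,y_{m+k})$ of $S$ such that $(y_1,\dots,y_m,y_{m+1},\dots,y_{m+k})$ is a $t$-weak ordering of the multiset $M\cup S$.
   Context: $M\cup S$ is the multiset union (multiplicities added). Given a multiset $M$ of size $m$, a $t$-weak ordering of $M$ is a sequence $(y_1,\dots,y_m)$ in which each element of $M$ appears exactly as many times as its multiplicity, such that the partial sums $s_0=0$, $s_i=y_1+\dots+y_i$ (summed left to right) satisfy $s_i\ne s_j$ whenever $0\le i<j\le m$ and $j-i\le t$. *)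

From HB Require Import structures.
From mathcomp Require Import all_boot.
Set Implicit Arguments. Unset Strict Implicit. Unset Printing Implicit Defensive.

Local Open Scope group_scope.

(* The paper writes the group additively; mathcomp's (possibly infinite,
   non-commutative) [groupType] is written multiplicatively, so "sum" is
   the group product and 0 is the identity 1. *)

Definition partial_sum (G : groupType) (ys : seq G) (i : nat) : G :=
  foldl (fun a b => a * b) 1 (take i ys).

Definition t_weak (G : groupType) (t : nat) (ys : seq G) : Prop :=
  forall i j : nat, i < j -> j <= size ys -> j - i <= t ->
    partial_sum ys i != partial_sum ys j.

(* A sequence is t-weak iff none of its nonempty blocks of at most t consecutive
   terms sums to zero.  Appending x to such a sequence B preserves this unless x
   is one of t values determined by the end of B, so the elements of S can be
   appended greedily until at most t of them are left over.  To place those, the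
   greedy phase is preceded by t + 1 chunks L_k R_k with |L_k| = |R_k| = t:
   inserting x between L_k and R_k is harmless unless x is one of (t + 1)^2
   values forbidden by that gap, and the chunks are chosen, again greedily, so
   that the forbidden sets of different gaps meet only in the identity.  Each
   leftover element is then forbidden in at most one gap, so the t leftovers can
   be inserted into distinct gaps among the t + 1 available. *)

From HB Require Import structures.
From mathcomp Require Import all_boot zify.

Set Implicit Arguments. Unset Strict Implicit. Unset Printing Implicit Defensive.
Local Open Scope group_scope.

Lemma cat_eq_cat3 (T : Type) (P Q u v w : seq T) : P ++ Q = u ++ v ++ w ->
  [\/ exists w', P = u ++ v ++ w', exists u', Q = u' ++ v ++ w
    | exists a b, [/\ v = a ++ b, P = u ++ a & Q = b ++ w]].
Proof.
move=> E; have EP : P = take (size P) (u ++ v ++ w) by rewrite -E take_size_cat.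
have EQ : Q = drop (size P) (u ++ v ++ w) by rewrite -E drop_size_cat.
have [Huv | Huv] := leqP (size (u ++ v)) (size P).
  apply: Or31; exists (drop (size (u ++ v)) P).
  have Etake : take (size (u ++ v)) P = u ++ v.
    by rewrite -(takel_cat Q Huv) E catA take_size_cat.
  by rewrite -{1}(cat_take_drop (size (u ++ v)) P) Etake catA.
rewrite size_cat in Huv; rewrite drop_cat take_cat in EQ EP.
case: ifP EQ EP => Hu EQ EP; first by apply: Or32; exists (drop (size P) u).
have Hk : size P - size u < size v by lia.
rewrite takel_cat 1?ltnW // in EP; rewrite drop_cat Hk in EQ.
by apply: Or33; exists (take (size P - size u) v), (drop (size P - size u) v);
  rewrite cat_take_drop.
Qed.

Lemma cat_prefix (T : Type) (B C b w : seq T) :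
  B ++ C = b ++ w -> size b <= size B -> B = b ++ drop (size b) B.
Proof.
by move=> E Hb; rewrite -{1}(cat_take_drop (size b) B) -(takel_cat C Hb) E take_size_cat.
Qed.

Lemma greedy_extend (T : eqType) (P : seq T -> Prop) (avoid : seq T -> seq T)
    (a n : nat) (pool : seq T) :
  uniq pool -> n + a <= size pool -> P [::] ->
  (forall s, size s < n -> P s -> size (avoid s) <= a) ->
  (forall s w, size s < n -> P s -> w \in pool -> w \notin avoid s -> P (rcons s w)) ->
  exists s pool', [/\ size s = n, perm_eq pool (s ++ pool') & P s].
Proof.
move=> Upool Hsize P0 Havoid Hstep.
suff /(_ n (leqnn n)) : forall k, k <= n -> exists s pool',
    [/\ size s = k, perm_eq pool (s ++ pool') & P s] by [].
elim=> [_|k IH Hk]; first by exists [::], pool.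
have [s [pool' [Hs Hperm Ps]]] := IH (ltnW Hk).
have Hsize' : size pool' = size pool - k by rewrite (perm_size Hperm) size_cat Hs; lia.
have Upool' : uniq pool' by move: Upool; rewrite (perm_uniq Hperm) cat_uniq => /and3P[].
have [w Hw Hwav] : exists2 w, w \in pool' & w \notin avoid s.
  apply/hasP; apply: contraT => /hasPn Hsub.
  have := uniq_leq_size Upool' (fun w Hw => negbNE (Hsub w Hw)).
  have := Havoid s; rewrite Hs => /(_ Hk Ps); lia.
exists (rcons s w), (rem w pool'); split.
- by rewrite size_rcons Hs.
- by rewrite (perm_trans Hperm) // -cats1 -catA perm_cat2l perm_to_rem.
- by apply: Hstep; rewrite ?Hs // (perm_mem Hperm) mem_cat Hw orbT.
Qed.

Lemma fill_gaps (A : Type) (T : eqType) (forb : A -> seq T) (gs : seq A) (Q : seq T) :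
  {in Q, forall x, count (fun g => x \in forb g) gs <= 1} -> size Q < size gs ->
  exists I, all2 (fun g i => (size i <= 1) && all (fun x => x \notin forb g) i) gs I
            /\ perm_eq (flatten I) Q.
Proof.
pose blocked gs x := has (fun g => x \in forb g) gs.
(* A spare gap is only needed while some element is forbidden in some gap. *)
suff gen : forall gs Q, {in Q, forall x, count (fun g => x \in forb g) gs <= 1} ->
    size Q + has (blocked gs) Q <= size gs -> exists I,
    all2 (fun g i => (size i <= 1) && all (fun x => x \notin forb g) i) gs I
    /\ perm_eq (flatten I) Q.
  by move=> HQ Hs; apply: gen => //; case: has => /=; lia.
move=> {gs Q}; elim=> [|g gs IH] Q HQ Hs; first by case: Q HQ Hs => // _ _; exists [::].
have HQ' : {in Q, forall x, count (fun g => x \in forb g) gs <= 1}.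
  by move=> x /HQ /=; lia.
case: (boolP (has (fun x => x \notin forb g) Q)) => [/hasP[x Qx xg] | /hasPn Qg].
  have Hrem : has (blocked gs) (rem x Q) <= has (blocked (g :: gs)) Q.
    case: (boolP (has _ _)) => [/hasP[y /mem_rem Qy Hy]|//]; rewrite lt0b.
    by apply/hasP; exists y => //=; rewrite Hy orbT.
  have Hs' : size (rem x Q) + has (blocked gs) (rem x Q) <= size gs.
    by move: Hs Hrem; rewrite size_rem //=; case: Q Qx {HQ HQ'} => //= *; lia.
  have [I [HI Hperm]] := IH (rem x Q) (fun y Qy => HQ' y (mem_rem Qy)) Hs'.
  exists ([:: x] :: I); split; first by rewrite /= xg HI.
  by rewrite perm_sym (perm_trans (perm_to_rem Qx)) //= perm_cons perm_sym.
have free : ~~ has (blocked gs) Q.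
  apply/hasPn => x Qx; rewrite /blocked has_count -leqNgt.
  by have := HQ x Qx; move/negPn: (Qg x Qx) => /= ->; lia.
have Hs' : size Q + has (blocked gs) Q <= size gs.
  rewrite (negbTE free) addn0; move: Hs.
  case: Q {HQ HQ' free} Qg => //= x Q /(_ x (mem_head _ _)) /negPn ->.
  by rewrite orTb addn1 ltnS.
have [I [HI Hperm]] := IH Q HQ' Hs'.
by exists ([::] :: I); rewrite /= HI.
Qed.

Lemma mulg3_eq1 (G : groupType) (a x b : G) : (a * x * b == 1) = (x == a^-1 * b^-1).
Proof. by rewrite mulg_eq1 -(inj_eq (mulgI a^-1)) mulKg. Qed.

Section ZeroSumFree.
Variables (G : groupType) (t : nat).

Definition zero_sum_free (s : seq G) : Prop :=
  forall u v w, s = u ++ v ++ w -> 0 < size v <= t -> \prod_(x <- v) x != 1.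

Lemma partial_sum_block (s : seq G) i j : i <= j ->
  partial_sum s j = partial_sum s i * \prod_(x <- take (j - i) (drop i s)) x.
Proof.
by move=> le_ij; rewrite /partial_sum !foldl_idx -(subnKC le_ij) takeD big_cat addKn.
Qed.

Lemma t_weak_zero_sum_free s : t_weak t s <-> zero_sum_free s.
Proof.
split=> [Hs u v w Es /andP[v_gt0 v_le] | Hs i j lt_ij le_js le_ji].
  have := Hs (size u) (size u + size v).
  rewrite (partial_sum_block _ (leq_addr _ _)) addKn Es drop_size_cat //.
  rewrite take_size_cat // -{1}(mulg1 (partial_sum _ _)) (inj_eq (mulgI _)) eq_sym.
  by apply; rewrite ?size_cat; lia.
rewrite (partial_sum_block _ (ltnW lt_ij)) -{1}(mulg1 (partial_sum _ _)).
rewrite (inj_eq (mulgI _)) eq_sym; apply: (Hs (take i s) _ (drop (j - i) (drop i s))).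
  by rewrite !cat_take_drop.
by rewrite size_take size_drop; case: ifP; lia.
Qed.

Lemma zero_sum_free_infix u s w : zero_sum_free (u ++ s ++ w) -> zero_sum_free s.
Proof.
by move=> Hs a v b Es Hv; apply: (Hs (u ++ a) v (b ++ w)); rewrite // Es -!catA.
Qed.

Lemma zero_sum_free_catl s w : zero_sum_free (s ++ w) -> zero_sum_free s.
Proof. exact: (@zero_sum_free_infix [::]). Qed.

Lemma zero_sum_free_catr u s : zero_sum_free (u ++ s) -> zero_sum_free s.
Proof. by move=> Hs; apply: (@zero_sum_free_infix u _ [::]); rewrite cats0. Qed.

Lemma zero_sum_free_glue A B C : t.-1 <= size B ->
  zero_sum_free (A ++ B) -> zero_sum_free (B ++ C) -> zero_sum_free (A ++ B ++ C).
Proof.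
move=> HB HAB HBC u v w E Hv.
have [[w' EA] | [u' EBC] | [a [b [Ev EA EBC]]]] := cat_eq_cat3 E.
- by apply: (HAB u v (w' ++ B)) => //; rewrite EA -!catA.
- exact: (HBC u' v w).
case: a Ev EA => [|x a] Ev EA; first by apply: (HBC [::] v w) => //; rewrite Ev.
have Hb : size b <= size B by move: Hv; rewrite Ev size_cat /=; lia.
rewrite (cat_prefix EBC Hb) in HAB.
by apply: (HAB u v (drop (size b) B)) => //; rewrite EA Ev -!catA.
Qed.

Lemma zero_sum_free_replace X L M R Y : t.-1 <= size L -> t.-1 <= size R ->
  zero_sum_free (L ++ M ++ R) -> zero_sum_free (X ++ L ++ R ++ Y) ->
  zero_sum_free (X ++ L ++ M ++ R ++ Y).
Proof.
move=> HL HR HLMR HXLRY.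
have HXL : zero_sum_free (X ++ L) by apply: (@zero_sum_free_catl _ (R ++ Y)); rewrite -catA.
have HRY : zero_sum_free (R ++ Y) by apply: (@zero_sum_free_catr (X ++ L)); rewrite -catA.
have HXLMR : zero_sum_free ((X ++ L ++ M) ++ R).
  by rewrite -!catA; apply: zero_sum_free_glue.
have -> : X ++ L ++ M ++ R ++ Y = (X ++ L ++ M) ++ R ++ Y by rewrite -!catA.
exact: zero_sum_free_glue.
Qed.

Definition forbidden_after (B : seq G) : seq G :=
  [seq (\prod_(x <- drop (size B - k) B) x)^-1 | k <- iota 0 t].

Lemma size_forbidden_after B : size (forbidden_after B) = t.
Proof. by rewrite size_map size_iota. Qed.

Lemma zero_sum_free_rcons B y :
  zero_sum_free B -> y \notin forbidden_after B -> zero_sum_free (rcons B y).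
Proof.
move=> HB Hy u v w E Hv; case/lastP: w E => [|w z] E.
  case/lastP: v E Hv => [|a z]; first by [].
  rewrite cats0 -rcons_cat => /rcons_inj[EB <-] Hv.
  rewrite big_rcons /=; apply: contra Hy => /eqP/mulg1_eq <-.
  apply/mapP; exists (size a); last by rewrite EB size_cat addnK drop_size_cat.
  by rewrite mem_iota; move: Hv; rewrite size_rcons; lia.
by move: E; rewrite -!rcons_cat => /rcons_inj[EB _]; apply: (HB u v w).
Qed.

Definition forbidden_between (L R : seq G) : seq G :=
  [seq (\prod_(x <- drop i L) x)^-1 * (\prod_(x <- take j R) x)^-1
     | i <- iota 0 (size L).+1, j <- iota 0 (size R).+1].

Lemma size_forbidden_between L R :
  size (forbidden_between L R) = ((size L).+1 * (size R).+1)%N.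
Proof. by rewrite size_allpairs !size_iota. Qed.

Lemma zero_sum_free_insert L y R : zero_sum_free L -> zero_sum_free R ->
  y \notin forbidden_between L R -> zero_sum_free (L ++ y :: R).
Proof.
move=> HL HR Hy.
have Hmid u a b w : L = u ++ a -> R = b ++ w -> \prod_(x <- a ++ y :: b) x != 1.
  move=> EL ER; rewrite big_cat big_cons /= mulgA mulg3_eq1.
  apply: contra Hy => /eqP ->; apply/allpairsP; exists (size u, size b).
  rewrite EL ER; split; rewrite ?mem_iota ?size_cat /=; try lia.
  by rewrite drop_size_cat // take_size_cat.
move=> u v w E Hv.
have [[w' EL] | [[|z u'] ER] | [a [[|z b] [Ev EL ER]]]] := cat_eq_cat3 E.
- exact: (HL u v w').
- case: v {E} ER Hv => [//|z v] [<- ER] _.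
  exact: (Hmid L [::] v w (esym (cats0 L)) ER).
- by case: ER => _ ER; apply: (HR u' v w).
- by apply: (HL u v [::]); rewrite // Ev !cats0.
- by case: ER => Ez ER; rewrite Ev -Ez; apply: Hmid EL ER.
Qed.

(* Every gap forbids the identity (empty suffix and prefix), hence the exception. *)
Definition gap_disjoint (Bp L R : seq G) : Prop :=
  {in Bp, forall y, y != 1 -> y \notin forbidden_between L R}.

Lemma gap_disjoint_rconsl Bp L w :
  w \notin [seq (\prod_(x <- drop i L) x)^-1 * y^-1 | i <- iota 0 (size L).+1, y <- Bp] ->
  gap_disjoint Bp (rcons L w) [::].
Proof.
move=> Hw y By; apply: contraNN => /allpairsP[[i j] [Hi _ /= Ey]].
move: Hi; rewrite mem_iota size_rcons => Hi; rewrite big_nil invg1 mulg1 in Ey.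
have [le_iL | lt_Li] := leqP i (size L); last first.
  by rewrite Ey drop_oversize ?size_rcons // big_nil invg1.
apply: contraNT Hw => _; apply/allpairsP; exists (i, y).
rewrite mem_iota ltnS le_iL; split=> //.
by rewrite Ey drop_rcons // big_rcons /= invgK mulKg.
Qed.

Lemma gap_disjoint_rconsr Bp L R w : gap_disjoint Bp L R ->
  w \notin [seq (\prod_(x <- drop i L) x * y * \prod_(x <- R) x)^-1
              | i <- iota 0 (size L).+1, y <- Bp] ->
  gap_disjoint Bp L (rcons R w).
Proof.
move=> HLR Hw y By y1; apply/negP => /allpairsP[[i j] [Hi Hj Ey]].
move: Hj; rewrite mem_iota size_rcons /= => Hj.
have [le_jR | lt_Rj] := leqP j (size R).
  move/negP: (HLR y By y1); apply; apply/allpairsP; exists (i, j).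
  split=> //; first by rewrite mem_iota ltnS le_jR.
  by rewrite Ey -cats1 takel_cat.
move/negP: Hw; apply; apply/allpairsP; exists (i, y); split=> //.
by rewrite Ey take_oversize ?size_rcons // big_rcons /= mulVKg invgM invgK mulKg.
Qed.

Lemma gap_left (Bp B pool : seq G) : zero_sum_free B -> uniq pool ->
  t + (t + t.+1 * size Bp) <= size pool ->
  exists L pool', [/\ size L = t, perm_eq pool (L ++ pool'),
    zero_sum_free (B ++ L) & gap_disjoint Bp L [::]].
Proof.
move=> HB Upool Hpool.
pose P L := zero_sum_free (B ++ L) /\ gap_disjoint Bp L [::].
pose avoid L := forbidden_after (B ++ L) ++
  [seq (\prod_(x <- drop i L) x)^-1 * y^-1 | i <- iota 0 (size L).+1, y <- Bp].
have P0 : P [::].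
  split; first by rewrite cats0.
  by move=> y _; apply: contraNN; rewrite mem_seq1 big_nil invg1 mulg1.
have size_avoid L : size L < t -> P L -> size (avoid L) <= t + t.+1 * size Bp.
  move=> ltLt _; rewrite size_cat size_forbidden_after size_allpairs size_iota.
  by rewrite leq_add2l leq_mul2r ltnS ltnW ?orbT.
have P_rcons L w : size L < t -> P L -> w \in pool -> w \notin avoid L -> P (rcons L w).
  move=> _ [HBL _] _; rewrite mem_cat negb_or => /andP[w_after w_gap].
  by split; [rewrite -rcons_cat; apply: zero_sum_free_rcons | apply: gap_disjoint_rconsl].
have [L [pool' [sizeL permL [HBL HL]]]] :=
  greedy_extend Upool Hpool P0 size_avoid P_rcons.
by exists L, pool'.
Qed.

Lemma gap_right (Bp B L pool : seq G) : size L = t -> zero_sum_free (B ++ L) ->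
  gap_disjoint Bp L [::] -> uniq pool -> t + (t + t.+1 * size Bp) <= size pool ->
  exists R pool', [/\ size R = t, perm_eq pool (R ++ pool'),
    zero_sum_free (B ++ L ++ R) & gap_disjoint Bp L R].
Proof.
move=> sizeL HBL HL Upool Hpool.
pose P R := zero_sum_free (B ++ L ++ R) /\ gap_disjoint Bp L R.
pose avoid R := forbidden_after (B ++ L ++ R) ++
  [seq (\prod_(x <- drop i L) x * y * \prod_(x <- R) x)^-1
     | i <- iota 0 (size L).+1, y <- Bp].
have P0 : P [::] by split; rewrite ?cats0.
have size_avoid R : size R < t -> P R -> size (avoid R) <= t + t.+1 * size Bp.
  by move=> _ _; rewrite size_cat size_forbidden_after size_allpairs size_iota sizeL.
have P_rcons R w : size R < t -> P R -> w \in pool -> w \notin avoid R -> P (rcons R w).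
  move=> _ [HBLR HLR] _; rewrite mem_cat negb_or => /andP[w_after w_gap].
  by split; [rewrite -!rcons_cat; apply: zero_sum_free_rcons | apply: gap_disjoint_rconsr].
have [R [pool' [sizeR permR [HBLR HLR]]]] :=
  greedy_extend Upool Hpool P0 size_avoid P_rcons.
by exists R, pool'.
Qed.

Lemma gapped_chunk (Bp B pool : seq G) : zero_sum_free B -> uniq pool ->
  3 * t + t.+1 * size Bp <= size pool ->
  exists L R pool', [/\ size L = t, size R = t, perm_eq pool (L ++ R ++ pool'),
    zero_sum_free (B ++ L ++ R) & gap_disjoint Bp L R].
Proof.
move=> HB Upool Hpool.
have size_pool : t + (t + t.+1 * size Bp) <= size pool by lia.
have [L [pool1 [sizeL perm1 HBL HL]]] := gap_left HB Upool size_pool.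
have Upool1 : uniq pool1 by move: Upool; rewrite (perm_uniq perm1) cat_uniq => /and3P[].
have size_pool1 : t + (t + t.+1 * size Bp) <= size pool1.
  by move: Hpool; rewrite (perm_size perm1) size_cat sizeL; lia.
have [R [pool2 [sizeR perm2 HBLR HLR]]] := gap_right sizeL HBL HL Upool1 size_pool1.
exists L, R, pool2; split=> //.
by rewrite (perm_trans perm1) // perm_cat2l.
Qed.

Definition unfilled (cs : seq (seq G * seq G)) : seq G :=
  flatten [seq c.1 ++ c.2 | c <- cs].

Lemma size_unfilled cs : all (fun c => (size c.1 == t) && (size c.2 == t)) cs ->
  size (unfilled cs) = (size cs * (t + t))%N.
Proof.
elim: cs => // c cs IH /= /andP[/andP[/eqP sizeL /eqP sizeR] /IH size_rest].
by rewrite /unfilled /= -/(unfilled cs) size_cat size_cat sizeL sizeR size_rest mulSn.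
Qed.

Fixpoint gaps_disjoint (Bp : seq G) (cs : seq (seq G * seq G)) : Prop :=
  if cs is c :: cs' then
    gap_disjoint Bp c.1 c.2 /\ gaps_disjoint (forbidden_between c.1 c.2 ++ Bp) cs'
  else True.

Lemma count_gaps_disjoint Bp cs x : gaps_disjoint Bp cs -> x != 1 ->
  count (fun c => x \in forbidden_between c.1 c.2) cs <= (x \notin Bp).
Proof.
elim: cs Bp => [|c cs IH] Bp // [Hc Hcs] x1; rewrite [X in X <= _]/=.
have := IH _ Hcs x1; rewrite mem_cat negb_or; move: (Hc x).
by case: (x \in forbidden_between c.1 c.2); case: (x \in Bp) => // /(_ isT x1).
Qed.

(* A chunk consumes 2t elements and needs t + (t + 1) |Bp| spare candidates;
   each chunk adds (t + 1)^2 values to Bp. *)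
Lemma gapped_chunks n (Bp B pool : seq G) : zero_sum_free B -> uniq pool ->
  n * (3 * t + t.+1 * (size Bp + n * (t.+1 * t.+1))) <= size pool ->
  exists cs pool', [/\ size cs = n, all (fun c => (size c.1 == t) && (size c.2 == t)) cs,
    perm_eq pool (unfilled cs ++ pool'), zero_sum_free (B ++ unfilled cs)
    & gaps_disjoint Bp cs].
Proof.
elim: n Bp B pool => [|n IH] Bp B pool HB Upool Hpool.
  by exists [::], pool; rewrite cats0.
set X := 3 * t + _ in Hpool.
have Hchunk : 3 * t + t.+1 * size Bp <= size pool.
  apply: leq_trans (leq_trans (leq_pmull X (ltn0Sn n)) Hpool).
  by rewrite leq_add2l leq_mul2l leq_addr orbT.
have [L [R [pool1 [sizeL sizeR perm1 HBLR HLR]]]] := gapped_chunk HB Upool Hchunk.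
have Upool1 : uniq pool1.
  by move: Upool; rewrite (perm_uniq perm1) !cat_uniq => /and3P[_ _ /and3P[]].
have Hrest : n * (3 * t + t.+1 * (size (forbidden_between L R ++ Bp) + n * (t.+1 * t.+1)))
    <= size pool1.
  rewrite size_cat size_forbidden_between sizeL sizeR [_ + size Bp]addnC -addnA -mulSn -/X.
  move: Hpool; rewrite (perm_size perm1) !size_cat sizeL sizeR mulSn.
  by have : 3 * t <= X := leq_addr _ _; set nX := (n * X)%N; lia.
have [cs [pool' [sizecs halves perm' HBcs Hcs]]] := IH _ _ _ HBLR Upool1 Hrest.
exists ((L, R) :: cs), pool'; rewrite /unfilled /= -/(unfilled cs); split.
- by rewrite sizecs.
- by rewrite sizeL sizeR eqxx.
- by rewrite (perm_trans perm1) // -!catA !perm_cat2l.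
- by rewrite catA.
- by [].
Qed.

Definition fill (cs : seq (seq G * seq G)) (I : seq (seq G)) : seq G :=
  flatten [seq p.1.1 ++ p.2 ++ p.1.2 | p <- zip cs I].

Lemma perm_fill cs I : size cs = size I -> perm_eq (fill cs I) (unfilled cs ++ flatten I).
Proof.
elim: cs I => [|c cs IH] [|i I] //= [/IH perm_rest].
rewrite /fill /unfilled /= -/(fill cs I) -/(unfilled cs) -!catA perm_cat2l.
by rewrite perm_catCA perm_cat2l perm_sym perm_catCA perm_cat2l perm_sym.
Qed.

Lemma zero_sum_free_fill X Y cs I :
  all (fun c => (t.-1 <= size c.1) && (t.-1 <= size c.2)) cs ->
  all2 (fun c i => (size i <= 1) && all (fun x => x \notin forbidden_between c.1 c.2) i)
    cs I ->
  zero_sum_free (X ++ unfilled cs ++ Y) -> zero_sum_free (X ++ fill cs I ++ Y).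
Proof.
elim: cs I X => [|[L R] cs IH] [|i I] X //= /andP[/andP[HL HR] Hcs] /andP[Hi HI].
rewrite /fill /unfilled /= -/(fill cs I) -/(unfilled cs) -!catA => HX.
have HLR : zero_sum_free (L ++ R).
  by apply: (@zero_sum_free_infix X _ (unfilled cs ++ Y)); rewrite -catA.
have HLiR : zero_sum_free (L ++ i ++ R).
  case: i Hi {HI HX} => [|x [|? ?]] //= /andP[Hx _].
  apply: zero_sum_free_insert Hx.
  - exact: zero_sum_free_catl HLR.
  - exact: zero_sum_free_catr HLR.
have -> : X ++ L ++ i ++ R ++ fill cs I ++ Y = (X ++ L ++ i ++ R) ++ fill cs I ++ Y.
  by rewrite -!catA.
by apply: IH => //; rewrite -!catA; apply: zero_sum_free_replace.
Qed.

Lemma greedy_leftover (B pool : seq G) : zero_sum_free B -> uniq pool -> t <= size pool ->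
  exists D Q, [/\ perm_eq pool (D ++ Q), size Q = t & zero_sum_free (B ++ D)].
Proof.
move=> HB Upool size_pool.
pose P D := zero_sum_free (B ++ D).
have P0 : P [::] by rewrite /P cats0.
have P_rcons D w : size D < size pool - t -> P D -> w \in pool ->
    w \notin forbidden_after (B ++ D) -> P (rcons D w).
  by move=> _ HD _ Hw; rewrite /P -rcons_cat; apply: zero_sum_free_rcons.
have [D [Q [sizeD permD HD]]] := greedy_extend Upool (eq_leq (subnK size_pool)) P0
  (fun D _ _ => eq_leq (size_forbidden_after _)) P_rcons.
exists D, Q; split=> //; apply: (@addnI (size pool - t)).
by rewrite -{1}sizeD -size_cat -(perm_size permD) subnK.
Qed.

Lemma zero_sum_free_extend (B S : seq G) :
  zero_sum_free B -> uniq S -> all (fun x => x != 1) S ->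
  t.+1 * (3 * t + t.+1 * (t.+1 * (t.+1 * t.+1))) <= size S ->
  exists zs, perm_eq zs S /\ zero_sum_free (B ++ zs).
Proof.
move=> HB uniqS S_nontriv sizeS.
have [cs [pool [sizecs halves permS Hcs disj]]] :=
  @gapped_chunks t.+1 [::] _ _ HB uniqS sizeS.
have Upool : uniq pool by move: uniqS; rewrite (perm_uniq permS) cat_uniq => /and3P[].
have size_pool : t <= size pool.
  move: sizeS; rewrite (perm_size permS) size_cat (size_unfilled halves) sizecs => sizeS.
  rewrite -(leq_add2l (t.+1 * (t + t))); apply: leq_trans sizeS; nia.
have [D [Q [permPool sizeQ HD]]] := greedy_leftover Hcs Upool size_pool.
have Q_once : {in Q, forall x, count (fun c => x \in forbidden_between c.1 c.2) cs <= 1}.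
  move=> x Qx; have xS : x \in S.
    by rewrite (perm_mem permS) mem_cat (perm_mem permPool) mem_cat Qx !orbT.
  exact: leq_trans (count_gaps_disjoint disj (allP S_nontriv x xS)) (leq_b1 _).
have ltQcs : size Q < size cs by rewrite sizeQ sizecs.
have [I [HI permI]] := fill_gaps Q_once ltQcs.
have sizeI : size cs = size I by move: HI; rewrite all2E => /andP[/eqP].
exists (fill cs I ++ D); split.
  rewrite (perm_trans (perm_cat (perm_fill sizeI) (perm_refl D))) // perm_sym.
  rewrite (perm_trans permS) // -catA perm_cat2l (perm_trans permPool) //.
  by rewrite perm_catC perm_cat2r perm_sym.
have halves' : all (fun c => (t.-1 <= size c.1) && (t.-1 <= size c.2)) cs.
  by apply: sub_all halves => c /andP[/eqP-> /eqP->]; rewrite leq_pred.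
by apply: zero_sum_free_fill halves' HI _; rewrite catA.
Qed.

End ZeroSumFree.

Theorem proposition2p4 :
  forall t : nat, (0 < t)%N ->
  exists K : nat,
    forall (G : groupType) (M S ys : seq G),
      all (fun x => x != 1) M ->
      uniq S -> all (fun x => x != 1) S -> (K <= size S)%N ->
      perm_eq ys M -> t_weak t ys ->
      exists zs : seq G, perm_eq zs S /\ t_weak t (ys ++ zs).
Proof.
move=> t _; exists (t.+1 * (3 * t + t.+1 * (t.+1 * (t.+1 * t.+1))))%N.
move=> G M S ys _ uniqS S_nontriv sizeS _ /t_weak_zero_sum_free Hys.
have [zs [permS Hzs]] := zero_sum_free_extend Hys uniqS S_nontriv sizeS.
by exists zs; split=> //; apply/t_weak_zero_sum_free.
Qed.
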